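(* Let $\mathcal{A}$ be a linear hyperplane arrangement in $\mathbb{R}^n$ and let $L_{n-d},L'_{n-d}$ be linear subspaces of $\mathbb{R}^n$ of codimension $d$. If $L_{n-d}$ is in general position with respect to $\mathcal{A}$, then $$\{R\in\mathcal{R}(\mathcal{A}):\bar R\cap L_{n-d}\neq\{0\}\}=\{R\in\mathcal{R}(\mathcal{A}):R\cap L_{n-d}\neq\varnothing\},$$ $$\#\{R\in\mathcal{R}(\mathcal{A}):\bar R\cap L'_{n-d}\neq\{0\}\}\ge\#\{R\in\mathcal{R}(\mathcal{A}):\bar R\cap L_{n-d}\neq\{0\}\},$$ $$\#\{R\in\mathcal{R}(\mathcal{A}):R\cap L'_{n-d}\neq\varnothing\}\le\#\{R\in\mathcal{R}(\mathcal{A}):R\cap L_{n-d}\neq\varnothing\}.$$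
   Context: A linear hyperplane arrangement $\mathcal{A}$ in $\mathbb{R}^n$ is a finite set of distinct hyperplanes through the origin; $\mathcal{R}(\mathcal{A})$ is the set of connected components of $\mathbb{R}^n\setminus\bigcup_{H\in\mathcal{A}}H$; $\bar R$ is the closure of $R$. For $\mathcal{B}\subset\mathcal{A}$, $\mathrm{rank}(\mathcal{B})=n-\dim\bigcap_{H\in\mathcal{B}}H$. A linear subspace $L_{n-d}$ of codimension $d\le n-1$ is in general position w.r.t. $\mathcal{A}$ if for every nonempty $\mathcal{B}\subset\mathcal{A}$, $\dim\bigcap_{H\in\mathcal{B}}(H\cap L_{n-d})$ equals $n-d-\mathrm{rank}(\mathcal{B})$ if $\mathrm{rank}(\mathcal{B})\le n-d$ and $0$ otherwise. *)

From HB Require Import structures.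
From mathcomp Require Import all_boot all_order all_algebra.
From mathcomp Require Import all_classical all_reals all_analysis.
Set Implicit Arguments. Unset Strict Implicit. Unset Printing Implicit Defensive.
Import Order.TTheory GRing.Theory Num.Theory.
Import numFieldNormedType.Exports.
Local Open Scope classical_set_scope.
Local Open Scope ring_scope.

(* Ambient space R^n is 'rV[R]_n with its (product = Euclidean) topology.
   Linear subspaces are represented by row spaces of square matrices (mxalgebra). *)

Definition hyp_mx (R : realType) n (a : 'rV[R]_n) : 'M[R]_n := kermx a^T.

Definition pts (R : realType) n (L : 'M[R]_n) : set 'rV[R]_n :=
  [set x | (x <= L)%MS].

Definition arrangement (R : realType) n m (a : 'I_m -> 'rV[R]_n) : Prop :=
  (forall i, a i != 0) /\
  (forall i j, pts (hyp_mx (a i)) = pts (hyp_mx (a j)) -> i = j).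

Definition arr_union (R : realType) n m (a : 'I_m -> 'rV[R]_n) : set 'rV[R]_n :=
  [set x | exists i, pts (hyp_mx (a i)) x].

Definition regions (R : realType) n m (a : 'I_m -> 'rV[R]_n) : set (set 'rV[R]_n) :=
  [set C | exists2 x, (~` arr_union a) x &
     C = connected_component (~` arr_union a) x].

Definition arr_rank (R : realType) n m (a : 'I_m -> 'rV[R]_n) (B : {set 'I_m}) : nat :=
  (n - \rank (\bigcap_(i in B) hyp_mx (a i))%MS)%N.

Definition general_position (R : realType) n m (a : 'I_m -> 'rV[R]_n)
    (d : nat) (L : 'M[R]_n) : Prop :=
  forall B : {set 'I_m}, B != finset.set0 ->
    \rank (\bigcap_(i in B) (hyp_mx (a i) :&: L))%MS =
      (if (arr_rank a B <= n - d)%N then (n - d - arr_rank a B)%N else 0%N).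

From HB Require Import structures.
From mathcomp Require Import all_boot all_order all_algebra.
From mathcomp Require Import all_classical all_reals all_analysis.
From mathcomp Require Import lra zify.
Import Order.TTheory GRing.Theory Num.Theory.
Import numFieldNormedType.Exports.
Local Open Scope classical_set_scope.
Local Open Scope ring_scope.
Local Open Scope card_scope.

(* A region is a nonempty open cell [cell s t] = {x | (-1)^(t_i) <a_i, x> > 0} of the
   sign vector [t], and its closure is the closed cone [cone s t] with the same sign vector.
   Fix a subspace L of dimension k inside V and delete the first normal h: a cell of the
   remaining family that meets L gives at most two cells meeting L, and two only if it
   meets L ∩ h; dually, a cell whose closure meets L away from 0 gives at least one such
   cell, and two if this happens inside h.  Hence both counts compare with one
   deletion-restriction number [generic_count s V k], which depends on L only through k:
   the first count is at most, the second at least this number.  When L is in general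
   position, a nonzero point of L in the closure of a region can be pushed into the
   region without leaving L, because L and the hyperplanes through that point span the
   whole space; so for such L the two families of regions coincide. *)

Lemma card_le_uniq_seq {T : eqType} (s1 s2 : seq T) :
  uniq s1 -> uniq s2 -> (size s1 <= size s2)%N ->
  [set x | x \in s1] #<= [set x | x \in s2].
Proof.
case: s1 => [|x0 s1] u1 u2 le12.
  by rewrite (_ : [set x | x \in [::]] = set0) ?card_le0x //; apply/seteqP; split.
pose f x := nth x0 s2 (index x (x0 :: s1)).
have lt_index x : x \in x0 :: s1 -> (index x (x0 :: s1) < size s2)%N.
  by move=> xs; rewrite (leq_trans _ le12) ?index_mem.
have f_inj : {in [set x | x \in x0 :: s1] &, injective f}.
  move=> x y /[!inE] /= xs ys /eqP; rewrite /f nth_uniq ?lt_index // => /eqP.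
  by move=> /(congr1 (nth x0 (x0 :: s1))); rewrite !nth_index.
rewrite -(card_le_eql (inj_card_eq f_inj)); apply: subset_card_le.
by move=> _ [x xs <-]; rewrite /= mem_nth ?lt_index.
Qed.

Lemma sub_in_all2 {S : eqType} {T : Type} (r1 r2 : S -> T -> bool) s t :
  (forall x y, x \in s -> r1 x y -> r2 x y) -> all2 r1 s t -> all2 r2 s t.
Proof.
elim: s t => [|x s IH] [|y t] //= r12 /andP[rxy st].
by rewrite r12 ?mem_head // IH // => x' y' x's; apply: r12; rewrite in_cons x's orbT.
Qed.

Lemma all2_size {S T : Type} (r : S -> T -> bool) s t : all2 r s t -> size t = size s.
Proof. by elim: s t => [|x s IH] [|y t] //= /andP[_ /IH ->]. Qed.

Lemma bigcapmx_capr {F : fieldType} {I : finType} {n} {P : pred I} {A_ : I -> 'M[F]_n}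
    {B : 'M[F]_n} {i0} : P i0 ->
  (\bigcap_(i | P i) (A_ i :&: B) :=: (\bigcap_(i | P i) A_ i) :&: B)%MS.
Proof.
move=> Pi0; apply/eqmxP/andP; split.
  rewrite sub_capmx (bigcapmx_inf _ Pi0 (capmxSr _ _)) andbT.
  by apply/sub_bigcapmxP => i Pi; exact: bigcapmx_inf _ Pi (capmxSl _ _).
apply/sub_bigcapmxP => i Pi; rewrite sub_capmx capmxSr andbT.
exact: submx_trans (capmxSl _ _) (bigcapmx_inf _ Pi (submx_refl _)).
Qed.

(** * Sign cells of a family of linear forms *)

Section Cells.
Context {R : realFieldType} {n : nat}.
Implicit Types (h x y z w : 'rV[R]_n) (s : seq 'rV[R]_n) (t : seq bool).
Implicit Types (V L : 'M[R]_n).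

Definition dot h x : R := (x *m h^T) 0 0.

(* In a sign vector, [true] selects the negative side of the corresponding normal. *)
Definition sdot (b : bool) h x : R := (-1) ^+ b * dot h x.

Lemma dotD h x y : dot h (x + y) = dot h x + dot h y.
Proof. by rewrite /dot mulmxDl mxE. Qed.

Lemma dotZ h c x : dot h (c *: x) = c * dot h x.
Proof. by rewrite /dot -scalemxAl mxE. Qed.

Lemma sdotD b h x y : sdot b h (x + y) = sdot b h x + sdot b h y.
Proof. by rewrite /sdot dotD mulrDr. Qed.

Lemma sdotZ b h c x : sdot b h (c *: x) = c * sdot b h x.
Proof. by rewrite /sdot dotZ mulrCA. Qed.

Lemma sdotN b h x : sdot b h (- x) = - sdot b h x.
Proof. by rewrite -scaleN1r sdotZ mulN1r. Qed.

Lemma sdotB b h x y : sdot b h (x - y) = sdot b h x - sdot b h y.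
Proof. by rewrite sdotD sdotN. Qed.

Lemma sdot0 b h : sdot b h 0 = 0.
Proof. by rewrite /sdot /dot mul0mx mxE mulr0. Qed.

Lemma sdot_false h x : sdot false h x = dot h x.
Proof. exact: mul1r. Qed.

Lemma sdot_true h x : sdot true h x = - dot h x.
Proof. exact: mulN1r. Qed.

Lemma sdot_sign_gt0 h x : dot h x != 0 -> 0 < sdot (dot h x < 0) h x.
Proof. by rewrite /sdot mulr_sign; case: (ltrgt0P (dot h x)); rewrite ?oppr_gt0. Qed.

Lemma sdot_eq0 b h x : (sdot b h x == 0) = (dot h x == 0).
Proof. by rewrite /sdot mulf_eq0 signr_eq0. Qed.

Lemma sub_kermx_dot h x : (x <= kermx h^T)%MS = (dot h x == 0).
Proof.
apply/sub_kermxP/eqP => [x0 | x0]; first by rewrite /dot x0 mxE.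
by apply/rowP => i; rewrite ord1 [RHS]mxE.
Qed.

Lemma exists_sdot_gt0 b {h V} : ~~ (V <= kermx h^T)%MS ->
  exists2 z, (z <= V)%MS & 0 < sdot b h z.
Proof.
case/row_subPn => i; rewrite sub_kermx_dot -(sdot_eq0 b).
case: (ltrgt0P (sdot b h (row i V))) => // [pos | neg] _.
  by exists (row i V); rewrite ?row_sub.
by exists (-1 *: row i V); rewrite ?scalemx_sub ?row_sub // sdotZ mulN1r oppr_gt0.
Qed.

Definition cell s t : set 'rV[R]_n := [set x | all2 (fun h b => 0 < sdot b h x) s t].
Definition cone s t : set 'rV[R]_n := [set x | all2 (fun h b => 0 <= sdot b h x) s t].

Lemma cell_sub_cone s t : cell s t `<=` cone s t.
Proof.
rewrite /cell /cone /=.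
by elim: s t => [|h s IH] [|b t] x //= /andP[/ltW hx /IH sx]; apply/andP.
Qed.

Lemma cell_conic s t y w (al be : R) : cone s t y -> cell s t w ->
  0 <= al -> 0 < be -> cell s t (al *: y + be *: w).
Proof.
rewrite /cell /cone /= => + + al0 be0; elim: s t => [|h s IH] [|b t] //= /andP[hy sy] /andP[hw sw].
rewrite IH // andbT sdotD !sdotZ.
by apply: ltr_wpDl; [apply: mulr_ge0 | apply: mulr_gt0].
Qed.

Lemma small_shift_gt0 {c d : R} : 0 <= c -> (c == 0) ==> (0 < d) ->
  exists2 e : R, 0 < e & forall u, 0 < u <= e -> 0 < c + u * d.
Proof.
rewrite le_eqVlt => /orP[/eqP <- /implyP/(_ (eqxx _)) d0 | c0 _].
  by exists 1 => // u /andP[u0 _]; rewrite add0r mulr_gt0.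
have d1 : 0 < `|d| + 1 by rewrite ltr_wpDl.
exists (c / (`|d| + 1)) => [|u /andP[u0]]; first exact: divr_gt0.
rewrite ler_pdivlMr // => ue.
have : - (u * `|d|) <= u * d.
  rewrite lerNl -mulrN; apply: ler_wpM2l; first exact: ltW.
  by rewrite -normrN ler_norm.
nra.
Qed.

Lemma cone_inward {s t y} z : cone s t y ->
    all2 (fun h b => (dot h y == 0) ==> (0 < sdot b h z)) s t ->
  exists2 e : R, 0 < e & forall u, 0 < u <= e -> cell s t (y + u *: z).
Proof.
rewrite /cell /cone /=.
elim: s t => [|h s IH] [|b t] //=; first by exists 1.
move=> /andP[hy /IH sy] /andP[hz /sy[e1 e10 He1]].
rewrite -(sdot_eq0 b) in hz; have [e2 e20 He2] := small_shift_gt0 hy hz.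
exists (Num.min e1 e2) => [|u /andP[u0]]; first by rewrite lt_min e10 e20.
rewrite le_min => /andP[ue1 ue2].
by rewrite sdotD sdotZ He2 ?u0 // He1 ?u0.
Qed.

Lemma cell_segment s t y w u : cone s t y -> cell s t w -> 0 < u <= 1 ->
  cell s t (y + u *: (w - y)).
Proof.
move=> sy sw /andP[u0 u1].
have -> : y + u *: (w - y) = (1 - u) *: y + u *: w.
  by rewrite scalerBr scalerBl scale1r addrA addrAC.
by apply: cell_conic; rewrite ?subr_ge0.
Qed.

Lemma cone_cell_inward {s t y w} : cone s t y -> cell s t w ->
  all2 (fun h b => (dot h y == 0) ==> (0 < sdot b h (w - y))) s t.
Proof.
rewrite /cell /cone /=.
elim: s t => [|h s IH] [|b t] //= /andP[_ sy] /andP[hw sw].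
by rewrite IH // andbT sdotB -(sdot_eq0 b); apply/implyP => /eqP->; rewrite subr0.
Qed.

Lemma cell_shift {s t x} z : cell s t x ->
  exists2 e : R, 0 < e & forall u, 0 < u <= e -> cell s t (x + u *: z).
Proof.
move=> sx; apply: cone_inward; first exact: cell_sub_cone.
rewrite /cell /= in sx; elim: s t sx => [|h s IH] [|b t] //= /andP[hx /IH ->].
by rewrite -(sdot_eq0 b) gt_eqF.
Qed.

Definition signv s x := [seq dot h x < 0 | h <- s].

Definition off_hyps s : set 'rV[R]_n := [set x | all (fun h => dot h x != 0) s].

Lemma cell_size {s t x} : cell s t x -> size t = size s.
Proof. exact: all2_size. Qed.

Lemma cone0 s t : size t = size s -> cone s t 0.
Proof. by rewrite /cone /=; elim: s t => [|h s IH] [|b t] //= [/IH ->]; rewrite sdot0 lexx. Qed.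

Lemma cell_signv s x : off_hyps s x -> cell s (signv s x) x.
Proof.
rewrite /off_hyps /cell /=; elim: s => //= h s IH /andP[hx /IH ->].
by rewrite andbT sdot_sign_gt0.
Qed.

Lemma cell_off_hyps {s t x} : cell s t x -> off_hyps s x.
Proof.
rewrite /off_hyps /cell /=.
elim: s t => [|h s IH] [|b t] //= /andP[hx /IH ->].
by rewrite andbT -(sdot_eq0 b) gt_eqF.
Qed.

Lemma cell_signvE {s t x} : cell s t x -> t = signv s x.
Proof.
rewrite /cell /=; elim: s t => [|h s IH] [|b t] //= /andP[hx /IH <-].
by move: hx; rewrite /sdot mulr_sign; case: b => [/[!oppr_gt0] ->|/lt_gtF ->].
Qed.

Lemma cone_off_hyps_cell s t x : cone s t x -> off_hyps s x -> cell s t x.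
Proof.
rewrite /off_hyps /cell /cone /=.
elim: s t => [|h s IH] [|b t] //= /andP[hx sx] /andP[h0 s0].
by rewrite IH // andbT lt_neqAle hx eq_sym sdot_eq0 h0.
Qed.

Lemma cell_inj s t1 t2 : cell s t1 !=set0 -> cell s t1 = cell s t2 -> t1 = t2.
Proof.
move=> [x x1] E; have x2 : cell s t2 x by rewrite -E.
by rewrite (cell_signvE x1) (cell_signvE x2).
Qed.

(** * Counting the cells met by a subspace *)

Fixpoint signs (k : nat) : seq (seq bool) :=
  if k is k'.+1 then map (cons false) (signs k') ++ map (cons true) (signs k')
  else [:: [::]].

Lemma count_signsS (P : pred (seq bool)) k :
  count P (signs k.+1) =
    (count (fun t => P (false :: t)) (signs k) + count (fun t => P (true :: t)) (signs k))%N.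
Proof. by rewrite /= count_cat !count_map. Qed.

Lemma mem_signs t k : (t \in signs k) = (size t == k).
Proof.
have cons_inj (b : bool) : injective (cons b) by move=> ? ? [].
elim: k t => [|k IH] [|b t] //=; rewrite mem_cat.
  by apply/negP => /orP[] /mapP[].
have cons_notin u : (b :: u \in map (cons (~~ b)) (signs k)) = false.
  by apply/mapP => -[v _ [/eqP]]; case: b.
by rewrite eqSS -IH; case: b cons_notin => /= ->; rewrite mem_map ?orbF.
Qed.

Lemma uniq_signs k : uniq (signs k).
Proof.
have cons_inj (b : bool) : injective (cons b) by move=> ? ? [].
elim: k => [//|k IH] /=; rewrite cat_uniq !(map_inj_uniq (cons_inj _)) IH /= andbT.
by apply/hasPn => _ /mapP[t _ ->]; apply/mapP => -[].
Qed.

Definition cell_meets L s t : bool := `[< exists2 x, (x <= L)%MS & cell s t x >].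

Definition cone_meets V L s t : bool :=
  `[< (exists2 w, (w <= V)%MS & cell s t w) /\
      (exists y, [/\ (y <= L)%MS, y != 0 & cone s t y]) >].

(* Cells of [h :: s] meeting V refine cells of [s]; the ones split by h correspond to
   cells of [s] meeting V ∩ h, which is one dimension lower. *)
Fixpoint generic_count s V k : nat :=
  if s is h :: s' then
    if (V <= kermx h^T)%MS then 0%N else
    if k is k'.+1 then (generic_count s' V k + generic_count s' (V :&: kermx h^T)%MS k')%N
    else 0%N
  else 1%N.

Lemma rank_capmx_kerS L h : (\rank L <= (\rank (L :&: kermx h^T)%MS).+1)%N.
Proof.
have := rank_leq_col (L *m h^T); rewrite -(mxrank_mul_ker L h^T).
by set r := \rank (L *m h^T); set c := \rank _; lia.
Qed.

Lemma rank_capmx_ker {L h} : ~~ (L <= kermx h^T)%MS ->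
  \rank (L :&: kermx h^T)%MS = (\rank L).-1.
Proof.
rewrite sub_kermx -mxrank_eq0 -(mxrank_mul_ker L h^T) => nz.
by have := rank_leq_col (L *m h^T); case: (\rank _) nz => [|[]].
Qed.

Lemma cell_meets_ker L h s b t :
  (L <= kermx h^T)%MS -> cell_meets L (h :: s) (b :: t) = false.
Proof.
move=> Lh; apply/asboolP => -[x xL]; rewrite /cell /=.
have /eqP hx : dot h x == 0 by rewrite -sub_kermx_dot (submx_trans xL Lh).
by rewrite /sdot hx mulr0 ltxx.
Qed.

Lemma cell_meets_behead L h s b t : cell_meets L (h :: s) (b :: t) -> cell_meets L s t.
Proof. by move=> /asboolP[x xL /andP[_ sx]]; apply/asboolP; exists x. Qed.

Lemma cell_meets_both_sides L h s t :
    cell_meets L (h :: s) (false :: t) -> cell_meets L (h :: s) (true :: t) ->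
  cell_meets (L :&: kermx h^T)%MS s t.
Proof.
move=> /asboolP[y yL /andP[hy sy]] /asboolP[w wL /andP[hw sw]]; apply/asboolP.
rewrite sdot_false in hy; rewrite sdot_true oppr_gt0 in hw.
exists ((- dot h w) *: y + dot h y *: w).
  rewrite sub_capmx addmx_sub ?scalemx_sub //= sub_kermx_dot.
  by rewrite dotD !dotZ mulNr mulrC addNr.
by apply: cell_conic => //; [exact: cell_sub_cone | rewrite oppr_ge0 ltW].
Qed.

Lemma count_cell_meets_le s {V L} : (L <= V)%MS ->
  (count (cell_meets L s) (signs (size s)) <= generic_count s V (\rank L))%N.
Proof.
elim: s V L => [|h s IH] V L LV /=; first by rewrite addn0 leq_b1.
rewrite count_signsS.
have [Lh | Lh] := boolP (L <= kermx h^T)%MS.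
  by rewrite !(@eq_count _ _ pred0) ?count_pred0 // => t; exact: cell_meets_ker.
have Vh : ~~ (V <= kermx h^T)%MS by apply: contra Lh; exact: submx_trans.
have /prednK rL : (0 < \rank L)%N.
  by rewrite lt0n mxrank_eq0; apply: contraNneq Lh => ->; exact: sub0mx.
rewrite (negbTE Vh) -rL -count_predUI rL; apply: leq_add.
  apply: leq_trans _ (IH V L LV); apply: sub_count => t /orP[] /cell_meets_behead //.
rewrite -(rank_capmx_ker Lh); apply: leq_trans _ (IH _ _ (capmxS LV (submx_refl _))).
by apply: sub_count => t /andP[]; exact: cell_meets_both_sides.
Qed.

Lemma cone_meets_lift V L h s b t : ~~ (V <= kermx h^T)%MS ->
    cone_meets (V :&: kermx h^T)%MS (L :&: kermx h^T)%MS s t ->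
  cone_meets V L (h :: s) (b :: t).
Proof.
move=> Vh /asboolP[[w wVh sw] [y [yLh y0 sy]]]; apply/asboolP.
move: wVh yLh; rewrite !sub_capmx !sub_kermx_dot => /andP[wV /eqP wh] /andP[yL /eqP yh].
have [z zV hz] := exists_sdot_gt0 b Vh.
have [e e0 He] := cell_shift z sw.
split.
  exists (w + e *: z); first by rewrite addmx_sub ?scalemx_sub.
  apply/andP; split; last by apply: He; rewrite e0 lexx.
  by rewrite sdotD sdotZ /sdot wh mulr0 add0r mulr_gt0.
by exists y; split => //; apply/andP; split; rewrite // /sdot yh mulr0.
Qed.

Lemma cone_meets_extend {V L h s t} : (L <= V)%MS -> ~~ (V <= kermx h^T)%MS ->
  cone_meets V L s t -> exists b, cone_meets V L (h :: s) (b :: t).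
Proof.
move=> LV Vh /asboolP[[w wV sw] [y [yL y0 sy]]].
have [w' [w'V sw' hw']] : exists w', [/\ (w' <= V)%MS, cell s t w' & dot h w' != 0].
  have [hw | hw] := eqVneq (dot h w) 0; last by exists w.
  have [z zV] := exists_sdot_gt0 false Vh; rewrite sdot_false => hz.
  have [e e0 He] := cell_shift z sw.
  exists (w + e *: z); split; first by rewrite addmx_sub ?scalemx_sub.
    by apply: He; rewrite e0 lexx.
  by rewrite dotD dotZ hw add0r mulf_neq0 ?gt_eqF.
pose b := if dot h y == 0 then dot h w' < 0 else dot h y < 0.
have hy : 0 <= sdot b h y.
  rewrite /b; have [hy0 | hy0] := eqVneq (dot h y) 0; last exact/ltW/sdot_sign_gt0.
  by rewrite /sdot hy0 mulr0.
have act : (dot h y == 0) ==> (0 < sdot b h (w' - y)).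
  rewrite /b; have [hy0 | //] := eqVneq (dot h y) 0.
  have /eqP sy0 : sdot (dot h w' < 0) h y == 0 by rewrite sdot_eq0 hy0.
  by rewrite sdotB sy0 subr0 sdot_sign_gt0.
have hsy : cone (h :: s) (b :: t) y by apply/andP.
have [e e0 He] := cone_inward (w' - y) hsy (introT andP (conj act (cone_cell_inward sy sw'))).
exists b; apply/asboolP; split; last by exists y.
exists (y + e *: (w' - y)); last by apply: He; rewrite e0 lexx.
by rewrite addmx_sub ?scalemx_sub ?addmx_sub ?eqmx_opp ?(submx_trans yL LV).
Qed.

Lemma cone_meets_single V L h b : ~~ (V <= kermx h^T)%MS -> (0 < \rank L)%N ->
  cone_meets V L [:: h] [:: b].
Proof.
move=> Vh rL; apply/asboolP.
have [z zV hz] := exists_sdot_gt0 b Vh.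
have /rowV0Pn[y yL y0] : L != 0 by rewrite -mxrank_eq0 -lt0n.
split; first by exists z => //; rewrite /cell /= hz.
have [hy | hy] := lerP 0 (sdot b h y); first by exists y; split; rewrite // /cone /= hy.
exists (- y); split; rewrite ?eqmx_opp ?oppr_eq0 //.
by rewrite /cone /= sdotN oppr_ge0 ltW.
Qed.

Lemma generic_count_le_count_cone_meets s V L k : (L <= V)%MS -> (0 < k <= \rank L)%N ->
  (generic_count s V k <= count (cone_meets V L s) (signs (size s)))%N.
Proof.
elim: s V L k => [|h s IH] V L k LV /andP[k0 kL] /=.
  rewrite addn0 lt0b; apply/asboolP; split; first by exists 0; rewrite ?sub0mx.
  have /rowV0Pn[y yL y0] : L != 0 by rewrite -mxrank_eq0 -lt0n (leq_trans k0 kL).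
  by exists y.
case: ifPn => // Vh; case: k k0 kL => // k _ kL.
rewrite count_signsS -count_predUI; apply: leq_add.
  apply: leq_trans (IH V L k.+1 LV kL) _; apply: sub_count => t.
  by case/(cone_meets_extend LV Vh) => -[] /= ->; rewrite ?orbT.
case: k kL => [|k] kL.
  case: s {IH} => [|h' s] /=; last by case: ifP.
  by rewrite addn0 lt0b !cone_meets_single // (leq_trans _ kL).
apply: leq_trans (IH _ _ k.+1 (capmxS LV (submx_refl _)) _) _.
  by rewrite /= -ltnS (leq_trans kL (rank_capmx_kerS L h)).
by apply: sub_count => t Ht; apply/andP; split; exact: cone_meets_lift.
Qed.

Lemma cell_meets_cone_meets L s t : (0 < \rank L)%N ->
  cell_meets L s t -> cone_meets 1%:M L s t.
Proof.
move=> rL /asboolP[x xL sx]; apply/asboolP; split; first by exists x; rewrite ?submx1.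
have [x0 | x0] := eqVneq x 0; last by exists x; split => //; exact: cell_sub_cone.
have /rowV0Pn[z zL z0] : L != 0 by rewrite -mxrank_eq0 -lt0n.
have [e e0 He] := cell_shift z sx.
exists (x + e *: z); split; last by apply: cell_sub_cone; apply: He; rewrite e0 lexx.
  by rewrite addmx_sub ?scalemx_sub.
by rewrite x0 add0r scaler_eq0 negb_or z0 gt_eqF.
Qed.

Lemma cell_meets_nonempty L s t : cell_meets L s t -> cell s t !=set0.
Proof. by case/asboolP => x _ sx; exists x. Qed.

Lemma cone_meets_nonempty V L s t : cone_meets V L s t -> cell s t !=set0.
Proof. by case/asboolP => -[w _ sw] _; exists w. Qed.

Lemma count_cell_meets_le_cone_meets s L1 L2 : \rank L1 = \rank L2 -> (0 < \rank L2)%N ->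
  (count (cell_meets L1 s) (signs (size s)) <= count (cone_meets 1%:M L2 s) (signs (size s)))%N.
Proof.
move=> r12 r2; apply: (leq_trans (count_cell_meets_le s (submx1 L1))).
by rewrite r12; apply: generic_count_le_count_cone_meets; rewrite ?submx1 ?r2 /=.
Qed.

Lemma card_le_cells s (P Q : pred (seq bool)) k :
    (forall t, P t -> cell s t !=set0) -> (forall t, Q t -> cell s t !=set0) ->
    (count P (signs k) <= count Q (signs k))%N ->
  cell s @` [set t | t \in [seq t <- signs k | P t]] #<=
    cell s @` [set t | t \in [seq t <- signs k | Q t]].
Proof.
move=> Pcell Qcell PQ.
have inj (S : pred (seq bool)) : (forall t, S t -> cell s t !=set0) ->
    {in [set t | t \in [seq t <- signs k | S t]] &, injective (cell s)}.
  move=> Scell t1 t2 /[!inE] /= /[!mem_filter] /andP[/Scell t1s _] _.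
  exact: cell_inj.
rewrite (card_le_eql (inj_card_eq (inj P Pcell))) (card_le_eqr (inj_card_eq (inj Q Qcell))).
by apply: card_le_uniq_seq; rewrite ?filter_uniq ?uniq_signs // !size_filter.
Qed.

End Cells.

(** * Topology of the cells *)

Section Segments.
Context {R : realType} {V : normedModType R}.

Lemma ray_continuous (y z : V) : continuous (fun u : R => y + u *: z).
Proof.
move=> u; apply: (@continuousD _ _ _ (fun=> y) (fun u : R => u *: z)).
  exact: cst_continuous.
exact: (@continuousZr_tmp _ _ _ id).
Qed.

Lemma closure_ray (A : set V) (y z : V) :
  (forall u : R, 0 < u <= 1 -> A (y + u *: z)) -> closure A y.
Proof.
move=> Ayz B By.
have : nbhs (0 : R) ((fun u : R => y + u *: z) @^-1` B).
  by apply: ray_continuous; rewrite /= scale0r addr0.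
case/nbhs_ballP => e /= e0 He.
pose u := Num.min (e / 2) 1.
have u0 : 0 < u by rewrite lt_min ltr01 andbT divr_gt0.
exists (y + u *: z); split; first by apply: Ayz; rewrite u0 ge_min lexx orbT.
apply: He; rewrite /ball /= sub0r normrN gtr0_norm //.
by rewrite gt_min ltr_pdivrMr // ltr_pMr // ltr1n.
Qed.

Lemma star_connected {A : set V} {x0 : V} : A x0 ->
  (forall y (u : R), A y -> 0 < u <= 1 -> A (x0 + u *: (y - x0))) -> connected A.
Proof.
move=> Ax0 Astar.
pose seg y := (fun u : R => x0 + u *: (y - x0)) @` `[0, 1].
have segA y : A y -> seg y `<=` A.
  move=> Ay _ [u + <-]; rewrite /= in_itv /= => /andP[u0 u1].
  have [-> | u_gt0] := eqVneq u 0; first by rewrite scale0r addr0.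
  by apply: Astar; rewrite // lt_def u_gt0 u0.
have -> : A = \bigcup_(y in A) seg y.
  apply/seteqP; split => [y Ay | y [w Aw /segA]]; last exact.
  exists y => //; exists 1; first by rewrite /= in_itv /= ler01 lexx.
  by rewrite scale1r addrC subrK.
apply: bigcup_connected.
  exists x0 => y _; exists 0; first by rewrite /= in_itv /= lexx ler01.
  by rewrite scale0r addr0.
move=> y _; apply: connected_continuous_connected; first exact: segment_connected.
by apply: continuous_subspaceT; exact: ray_continuous.
Qed.

End Segments.

Section Topology.
Context {R : realType} {n : nat}.
Implicit Types (h x y w : 'rV[R]_n) (s : seq 'rV[R]_n) (t : seq bool).

Lemma dot_continuous h : continuous (dot h).
Proof.
have -> : dot h = fun x => \sum_(j < n) x 0 j * h 0 j.
  by apply/funext => x; rewrite /dot !mxE; apply: eq_bigr => j _; rewrite mxE.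
move=> x; elim: (index_enum 'I_n) => [|j r IH].
  by under eq_fun do rewrite big_nil; exact: cst_continuous.
under eq_fun do rewrite big_cons.
apply: (@continuousD _ _ _ (fun y : 'rV[R]_n => y 0 j * h 0 j)) => //.
apply: (@continuousM _ _ (fun y : 'rV[R]_n => y 0 j) (fun _ => h 0 j)).
  exact: coord_continuous.
exact: cst_continuous.
Qed.

Lemma sdot_continuous b h : continuous (sdot b h).
Proof.
move=> x; apply: (@continuousM _ _ (fun _ => (-1) ^+ b) (dot h)).
  exact: cst_continuous.
exact: dot_continuous.
Qed.

Lemma open_cell s t : open (cell s t).
Proof.
elim: s t => [|h s IH] [|b t].
- by rewrite (_ : cell _ _ = setT); [exact: openT | apply/seteqP; split].
- by rewrite (_ : cell _ _ = set0); [exact: open0 | apply/seteqP; split].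
- by rewrite (_ : cell _ _ = set0); [exact: open0 | apply/seteqP; split].
rewrite /cell /=.
have -> : [set x | (0 < sdot b h x) && all2 (fun h b => 0 < sdot b h x) s t] =
  sdot b h @^-1` [set r | 0 < r] `&` cell s t by apply/seteqP; split => x /andP.
apply: openI (IH t); apply: open_comp; last exact: open_gt.
by move=> x _; exact: sdot_continuous.
Qed.

Lemma closed_cone s t : closed (cone s t).
Proof.
elim: s t => [|h s IH] [|b t].
- by rewrite (_ : cone _ _ = setT); [exact: closedT | apply/seteqP; split].
- by rewrite (_ : cone _ _ = set0); [exact: closed0 | apply/seteqP; split].
- by rewrite (_ : cone _ _ = set0); [exact: closed0 | apply/seteqP; split].
rewrite /cone /=.
have -> : [set x | (0 <= sdot b h x) && all2 (fun h b => 0 <= sdot b h x) s t] =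
  sdot b h @^-1` [set r | 0 <= r] `&` cone s t by apply/seteqP; split => x /andP.
apply: closedI (IH t); apply: preimage_closed; last exact: closed_ge.
by move=> x _; exact: sdot_continuous.
Qed.

Lemma connected_cell s t : connected (cell s t).
Proof.
have [[x0 sx0] | /set0P/negP/negbNE/eqP ->] := pselect (cell s t !=set0); last exact: connected0.
by apply: (star_connected sx0) => y u sy; apply: cell_segment => //; exact: cell_sub_cone.
Qed.

Lemma closure_cell s t : cell s t !=set0 -> closure (cell s t) = cone s t.
Proof.
move=> [w sw]; apply/seteqP; split.
  rewrite [X in _ `<=` X](closure_id (cone s t)).1; last exact: closed_cone.
  by apply: closureS; exact: cell_sub_cone.
by move=> y sy; apply: (closure_ray _ _ (w - y)) => u u01; exact: cell_segment.
Qed.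

(* The cell of x is open, and closed in the complement of the hyperplanes, where it
   coincides with its cone; the component of x is connected, hence inside the cell. *)
Lemma component_off_hyps s x : off_hyps s x ->
  connected_component (off_hyps s) x = cell s (signv s x).
Proof.
move=> sx; set C := cell s (signv s x).
have Cx : C x by exact: cell_signv.
apply/seteqP; split; last first.
  by apply: connected_component_max => //; [move=> y /cell_off_hyps | exact: connected_cell].
set K := connected_component _ _.
suff <- : K `&` C = K by move=> y [].
apply: (@component_connected _ _ x).
- by exists x; split => //; exact: connected_component_refl.
- by exists C => //; exact: open_cell.
- exists (cone s (signv s x)); first exact: closed_cone.
  apply/seteqP; split => y [Ky Cy]; split => //; first exact: cell_sub_cone.
  by apply: cone_off_hyps_cell => //; exact: connected_component_sub Ky.
Qed.

End Topology.

(** * Regions of the arrangement *)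

Section Arrangement.
Context {R : realType} {n m : nat} (a : 'I_m -> 'rV[R]_n).
Let normals := [seq a i | i <- enum 'I_m].

Lemma size_normals : size normals = m.
Proof. by rewrite size_map size_enum_ord. Qed.

Lemma arr_unionC : ~` arr_union a = off_hyps normals.
Proof.
apply/seteqP; split => x.
  move=> xa; apply/allP => _ /mapP[i _ ->]; apply/negP => /eqP hx.
  by apply: xa; exists i; rewrite /pts /hyp_mx /= sub_kermx_dot hx.
move=> /allP xa [i]; rewrite /pts /hyp_mx /= sub_kermx_dot.
by apply/negP/xa/map_f; rewrite mem_enum.
Qed.

Lemma regionsE : regions a = cell normals @` [set t | cell normals t !=set0].
Proof.
rewrite /regions arr_unionC; apply/seteqP; split => C.
  case=> x xoff ->; exists (signv normals x); last by rewrite component_off_hyps.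
  by exists x; exact: cell_signv.
case=> t [x sx] <-; have xoff := cell_off_hyps sx.
by exists x => //; rewrite component_off_hyps // -(cell_signvE sx).
Qed.

Lemma setI_pts_neq0 (A : set 'rV[R]_n) (L : 'M[R]_n) : A 0 ->
  A `&` pts L != [set 0] <-> exists y, [/\ (y <= L)%MS, y != 0 & A y].
Proof.
move=> A0; split => [/eqP AL | [y [yL y0 Ay]]]; last first.
  by apply/eqP => AL; have : (A `&` pts L) y by []; rewrite AL => /eqP; rewrite (negbTE y0).
apply: contrapT => noy; apply: AL; apply/seteqP; split => [y [Ay yL] | _ ->].
  by apply/eqP/negPn/negP => y0; apply: noy; exists y.
by split; rewrite // /pts /= sub0mx.
Qed.

Lemma regions_meetingE L : [set C | regions a C /\ C `&` pts L !=set0] =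
  cell normals @` [set t | t \in [seq t <- signs m | cell_meets L normals t]].
Proof.
rewrite regionsE; apply/seteqP; split => C.
  case=> -[t [x sx] <-] [y [sy yL]]; exists t => //.
  rewrite /= mem_filter mem_signs -size_normals (cell_size sx) eqxx andbT.
  by apply/asboolP; exists y.
case=> t; rewrite /= mem_filter => /andP[/asboolP[y yL sy] _] <-.
by split; [exists t => //; exists y | exists y].
Qed.

Lemma closure_regions_meetingE L :
  [set C | regions a C /\ closure C `&` pts L != [set 0]] =
  cell normals @` [set t | t \in [seq t <- signs m | cone_meets 1%:M L normals t]].
Proof.
rewrite regionsE; apply/seteqP; split => C.
  case=> -[t [w sw] <-]; rewrite closure_cell; last by exists w.
  case/setI_pts_neq0; first exact/cone0/cell_size/sw.
  move=> y yLs; exists t => //.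
  rewrite /= mem_filter mem_signs -size_normals (cell_size sw) eqxx andbT.
  by apply/asboolP; split; [exists w; rewrite ?submx1 | exists y].
case=> t; rewrite /= mem_filter => /andP[/asboolP[[w _ sw] yLs] _] <-.
split; first by exists t => //; exists w.
by rewrite closure_cell; [apply/setI_pts_neq0; first exact/cone0/cell_size/sw | exists w].
Qed.

Lemma general_position_agree {d L} (B : {set 'I_m}) w :
    general_position a d L -> \rank L = (n - d)%N ->
    (0 < \rank ((\bigcap_(i in B) hyp_mx (a i)) :&: L)%MS)%N ->
  exists2 z, (z <= L)%MS & forall i, i \in B -> dot (a i) z = dot (a i) w.
Proof.
set X := (\bigcap_(i in B) hyp_mx (a i))%MS => gp rL rXL.
have [-> | /set0Pn[i0 i0B]] := eqVneq B finset.set0.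
  by exists 0; rewrite ?sub0mx // => i /[!inE].
move: (gp B (introT (set0Pn _) (ex_intro _ i0 i0B))).
rewrite (bigcapmx_capr i0B) /arr_rank -/X.
case: leqP => [_ rXL' | _ rXL0]; last by rewrite rXL0 in rXL.
(* rank (X :&: L) = rank X - d, so X + L is the whole space. *)
have /sub_addsmxP[[u v] /= ->] : (w <= X + L)%MS.
  apply/submx_full/eqP; have := mxrank_sum_cap X L; have := rank_leq_col X.
  rewrite rXL' rL in rXL *.
  by set rS := \rank (X + L); set rX := \rank X; lia.
exists (v *m L) => [|i iB]; first exact: submxMl.
have : (u *m X <= hyp_mx (a i))%MS by apply: submx_trans (submxMl _ _) (bigcapmx_inf _ iB _).
by rewrite /hyp_mx sub_kermx_dot dotD => /eqP ->; rewrite add0r.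
Qed.

Lemma general_position_cone_meets d L t : (d < n)%N -> \rank L = (n - d)%N ->
  general_position a d L -> cone_meets 1%:M L normals t = cell_meets L normals t.
Proof.
move=> dn rL gp; apply/idP/idP; last by apply: cell_meets_cone_meets; rewrite rL subn_gt0.
case/asboolP => -[w _ sw] [y [yL y0 sy]]; apply/asboolP.
(* Push y towards the cell along a z in L that agrees with w on the hyperplanes through y. *)
pose B : {set 'I_m} := [set i | dot (a i) y == 0]%SET.
have [|z zL zB] := general_position_agree B w gp rL.
  rewrite lt0n mxrank_eq0; apply/rowV0Pn; exists y => //.
  by rewrite sub_capmx yL andbT; apply/sub_bigcapmxP => i; rewrite inE /hyp_mx sub_kermx_dot.
have [|e e0 He] := cone_inward z sy.
  apply: sub_in_all2 sw => _ b /mapP[i _ ->] hw; apply/implyP => hy.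
  by rewrite /sdot zB ?inE.
exists (y + e *: z); first by rewrite addmx_sub ?scalemx_sub.
by apply: He; rewrite e0 lexx.
Qed.

End Arrangement.

Theorem lemma3p5 (R : realType) (n m d : nat) (a : 'I_m -> 'rV[R]_n)
    (L L' : 'M[R]_n) :
  arrangement a ->
  (d < n)%N ->
  \rank L = (n - d)%N ->
  \rank L' = (n - d)%N ->
  general_position a d L ->
  [/\ [set C | regions a C /\ closure C `&` pts L != [set 0]] =
        [set C | regions a C /\ C `&` pts L !=set0],
      [set C | regions a C /\ closure C `&` pts L != [set 0]] #<=
        [set C | regions a C /\ closure C `&` pts L' != [set 0]] &
      [set C | regions a C /\ C `&` pts L' !=set0] #<=
        [set C | regions a C /\ C `&` pts L !=set0]].
Proof.
move=> _ dn rL rL' gp; set s := [seq a i | i <- enum 'I_m].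
have count_le L1 L2 : \rank L1 = (n - d)%N -> \rank L2 = (n - d)%N ->
    (count (cell_meets L1 s) (signs m) <= count (cone_meets 1%:M L2 s) (signs m))%N.
  move=> r1 r2; rewrite -(size_normals a).
  by apply: count_cell_meets_le_cone_meets; rewrite ?r1 r2 ?subn_gt0.
have GF : [seq t <- signs m | cone_meets 1%:M L s t] = [seq t <- signs m | cell_meets L s t].
  by apply: eq_filter => t; exact: general_position_cone_meets dn rL gp.
rewrite !closure_regions_meetingE !regions_meetingE GF; split => //; last rewrite -GF.
  by apply: card_le_cells => [t|t|];
    [exact: cell_meets_nonempty | exact: cone_meets_nonempty | exact: count_le].
by apply: card_le_cells => [t|t|];
  [exact: cell_meets_nonempty | exact: cone_meets_nonempty | exact: count_le].
Qed.
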